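(* Fix an integer $t\geq 1$ and a real $\alpha$ with $0<\alpha<1-\frac{1}{\sqrt{2}}$. Then, as $m\to\infty$ through values for which $\alpha m$ is an integer, \[ R_t(\alpha m, m)\leq \left(1-\frac{1}{2^t}\right)2^m-\frac{\sqrt{2^t-1}}{2^t(2+\sqrt{2})}\,2^{ m \left(\frac{1}{2}+\alpha \log_2(1+\sqrt{2})\right)}(1+o(1)). \]
   Context: For a $t\times n$ matrix $\mathbf{v}$ over $\mathbb{F}_q$ with rows $\overline{v}_1,\dots,\overline{v}_t$, its $t$-weight is $\mathrm{wt}^{(t)}(\mathbf{v})=\left|\bigcup_{i=1}^t \mathrm{supp}(\overline{v}_i)\right|$, and $d^{(t)}(\mathbf{u},\mathbf{v})=\mathrm{wt}^{(t)}(\mathbf{u}-\mathbf{v})$. For a linear code $C\subseteq\mathbb{F}_q^n$ and $t\in\mathbb{N}$, let $C^t$ be the set of $t\times n$ matrices all of whose rows lie in $C$. The $t$-th generalized covering radius $R_t(C)$ is the smallest integer $\rho$ such that for every $\mathbf{v}\in\mathbb{F}_q^{t\times n}$ there is $\mathbf{c}\in C^t$ with $d^{(t)}(\mathbf{v},\mathbf{c})\leq \rho$. Binary Reed–Muller codes $\mathrm{RM}(r,m)\subseteq\mathbb{F}_2^{2^m}$ ($0\le r\le m$) are defined recursively: $\mathrm{RM}(0,m)=\{\overline{0},\overline{1}\}$, $\mathrm{RM}(m,m)=\mathbb{F}_2^{2^m}$, and for $1\leq r\leq m-1$, $\mathrm{RM}(r,m)=\{(\overline{u},\overline{u}+\overline{v})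 : \overline{u}\in \mathrm{RM}(r,m-1),\ \overline{v}\in\mathrm{RM}(r-1,m-1)\}$. It is a linear code of length $2^m$ and dimension $\sum_{i=0}^r\binom{m}{i}$. Write $R_t(r,m)=R_t(\mathrm{RM}(r,m))$. *)

From mathcomp Require Import all_boot.
Set Implicit Arguments. Unset Strict Implicit. Unset Printing Implicit Defensive.

(* Words of length n over F_2 (F_2 encoded as bool, + as xor). *)
Definition word (n : nat) := {ffun 'I_n -> bool}.
Definition tmatrix (t n : nat) := {ffun 'I_t -> word n}.

(* Binary Reed-Muller code RM(r,m), as a membership test on bit sequences of
   length 2^m, following the recursive (u | u+v) definition:
   RM(0,m) = {0,1}, RM(m,m) = F_2^(2^m), and for 1 <= r <= m-1,
   RM(r,m) = {(u, u+v) : u in RM(r,m-1), v in RM(r-1,m-1)}.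
   Given w = (a, b) with |a| = |b| = 2^(m-1), w = (u, u+v) forces u = a, v = a+b. *)
Fixpoint inRM (r m : nat) (w : seq bool) : bool :=
  match m with
  | 0 => size w == 1
  | m'.+1 =>
      (size w == 2 ^ m) &&
      (if r == 0 then (w == nseq (2 ^ m) false) || (w == nseq (2 ^ m) true)
       else if m <= r then true
       else inRM r m' (take (2 ^ m') w) &&
            inRM r.-1 m' [seq x.1 (+) x.2 | x <- zip (take (2 ^ m') w) (drop (2 ^ m') w)])
  end.

Definition RM (r m : nat) : pred (word (2 ^ m)) :=
  fun w => inRM r m [seq w i | i <- enum 'I_(2 ^ m)].

Definition tdist (t n : nat) (u v : tmatrix t n) : nat :=
  #|[set j : 'I_n | [exists i : 'I_t, u i j != v i j]]|.

Definition tcovers (t n : nat) (C : pred (word n)) (rho : nat) : bool :=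
  [forall v : tmatrix t n, [exists c : tmatrix t n,
      [forall i : 'I_t, C (c i)] && (tdist v c <= rho)]].

(* t-th generalized covering radius: the smallest rho such that rho covers.
   (Taken among rho <= n; rho = n always covers when C is nonempty, so this is
   the smallest such integer.) *)
Definition gen_cov_radius (t n : nat) (C : pred (word n)) : nat :=
  \big[minn/n]_(rho < n.+1 | tcovers t C rho) rho.

Definition Rt (t r m : nat) : nat := @gen_cov_radius t (2 ^ m) (@RM r m).

(* The Plotkin construction (u | u + v) gives R_t(r, m+1) <= R_t(r, m) + R_t(r-1, m), and
   R_t(m, m) = 0. For r = 1, fix the last t - 1 rows to their most frequent pattern, which
   occurs on a set T of at least 2^m / 2^(t-1) coordinates; by Parseval for the
   Walsh-Hadamard transform some affine function agrees with the first row on at least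
   (|T| + sqrt |T|) / 2 coordinates of T, so R_t(1, m) <= (1 - 2^-t) 2^m - kappa sqrt 2^m.
   The recursion then propagates the bound
     (1 - 2^-t) 2^m - kappa sqrt 2^m ((1 + sqrt 2)^(r-1) - beta^r gamma^m)
   for any beta, gamma with beta + 1 = sqrt 2 beta gamma and beta gamma >= 1 + sqrt 2.
   When alpha (2 + sqrt 2) < 1, i.e. alpha < 1 - 1/sqrt 2, beta can be taken slightly above
   1 + sqrt 2 so that beta^r gamma^m = o((1 + sqrt 2)^r) along r = alpha m. *)

From Stdlib Require Import Reals Lra Lia.
From HB Require Import structures.
From mathcomp Require Import ssreflect.
From mathcomp Require all_boot zify.

(* A module, so that the ssrnat notations imported here do not capture the Peano
   comparisons [(_ <= _)%nat] in the statement of [theorem21]. *)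
Module RMCovering.
Import all_boot zify.
Set Implicit Arguments. Unset Strict Implicit. Unset Printing Implicit Defensive.

Definition xorseq (s1 s2 : seq bool) := [seq x.1 (+) x.2 | x <- zip s1 s2].

Lemma size_xorseq s1 s2 : size s1 = size s2 -> size (xorseq s1 s2) = size s1.
Proof. by move=> eq_sz; rewrite size_map size_zip eq_sz minnn. Qed.

Lemma nth_xorseq s1 s2 k : size s1 = size s2 -> k < size s1 ->
  nth false (xorseq s1 s2) k = nth false s1 k (+) nth false s2 k.
Proof.
move=> eq_sz lt_k; rewrite (nth_map (false, false)) ?nth_zip //.
by rewrite size_zip eq_sz minnn -eq_sz.
Qed.

Lemma xorseqK s1 s2 : size s1 = size s2 -> xorseq s1 (xorseq s1 s2) = s2.
Proof.
rewrite /xorseq; elim: s1 s2 => [|x s1 IH] [|y s2] //= [] /IH ->.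
by rewrite addKb.
Qed.

Lemma xorseq_nseq s b : xorseq s (nseq (size s) b) = map (addb^~ b) s.
Proof. by rewrite /xorseq; elim: s => //= x s ->. Qed.

Lemma xorseq_negb s1 s2 : xorseq (map negb s1) (map negb s2) = xorseq s1 s2.
Proof. by rewrite /xorseq; elim: s1 s2 => [|x s1 IH] [|y s2] //=; rewrite IH; case: x; case: y. Qed.

Lemma expn2S m : 2 ^ m.+1 = 2 ^ m + 2 ^ m.
Proof. by rewrite expnS mul2n addnn. Qed.

Lemma inRMS r m w : inRM r m.+1 w = (size w == 2 ^ m.+1) &&
  (if r == 0 then (w == nseq (2 ^ m.+1) false) || (w == nseq (2 ^ m.+1) true)
   else if m.+1 <= r then true
   else inRM r m (take (2 ^ m) w) && inRM r.-1 m (xorseq (take (2 ^ m) w) (drop (2 ^ m) w))).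
Proof. by []. Qed.

Lemma inRM_nseq r m b : inRM r m (nseq (2 ^ m) b).
Proof.
elim: m r b => [|m IH] r b //; rewrite inRMS size_nseq eqxx /=.
case: (r == 0); first by case: (b); rewrite eqxx ?orbT.
case: (m.+1 <= r) => //.
rewrite expn2S take_nseq ?leq_addr // drop_nseq addnK.
by rewrite -[in X in xorseq _ X](size_nseq (2 ^ m) b) xorseq_nseq map_nseq !IH.
Qed.

Lemma inRM_full m s : size s = 2 ^ m -> inRM m m s.
Proof. by case: m => [|m] /= ->; rewrite ?eqxx ?leqnn. Qed.

Lemma inRM_negb r m s : inRM r m s -> inRM r m (map negb s).
Proof.
elim: m r s => [|m IH] r s; first by rewrite /= size_map.
rewrite !inRMS size_map => /andP[-> /=].
case: eqP => _.
  by case/orP=> /eqP ->; rewrite map_nseq eqxx ?orbT.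
case: (m.+1 <= r) => // /andP[s1 s2].
by rewrite -map_take -map_drop xorseq_negb IH.
Qed.

Lemma inRM_cat_xorseq r m u v : 0 < r -> size u = 2 ^ m -> size v = 2 ^ m ->
  inRM r m u -> inRM r.-1 m v -> inRM r m.+1 (u ++ xorseq u v).
Proof.
move=> r_gt0 sz_u sz_v RMu RMv.
have sz_uv : size (xorseq u v) = 2 ^ m by rewrite size_xorseq sz_u.
rewrite inRMS size_cat sz_uv sz_u -expn2S eqxx /= (negbTE (lt0n_neq0 r_gt0)).
case: (m.+1 <= r) => //.
by rewrite -sz_u take_size_cat ?drop_size_cat // xorseqK ?RMu ?RMv ?sz_u.
Qed.

Definition sdist t n (U W : 'I_t -> seq bool) : nat :=
  count (fun j => [exists i, nth false (U i) j != nth false (W i) j]) (iota 0 n).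

Definition scovers t n (P : pred (seq bool)) rho :=
  forall U : 'I_t -> seq bool, (forall i, size (U i) = n) ->
  exists W : 'I_t -> seq bool,
    [/\ forall i, P (W i), forall i, size (W i) = n & sdist n U W <= rho].

Lemma eq_sdist t n (U U' W W' : 'I_t -> seq bool) :
  (forall i, U i = U' i) -> (forall i, W i = W' i) -> sdist n U W = sdist n U' W'.
Proof.
by move=> eqU eqW; apply: eq_count => j; apply: eq_existsb => i; rewrite eqU eqW.
Qed.

Lemma sdist_cat t n1 n2 (U1 U2 W1 W2 : 'I_t -> seq bool) :
  (forall i, size (U1 i) = n1) -> (forall i, size (W1 i) = n1) ->
  sdist (n1 + n2) (fun i => U1 i ++ U2 i) (fun i => W1 i ++ W2 i) =
  sdist n1 U1 W1 + sdist n2 U2 W2.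
Proof.
move=> sz_U sz_W; rewrite /sdist iotaD count_cat add0n.
congr (_ + _).
  apply: eq_in_count => j; rewrite mem_iota => /andP[_ lt_j] /=.
  by apply: eq_existsb => i; rewrite !nth_cat sz_U sz_W lt_j.
rewrite -[n1 in iota n1](addn0 n1) iotaDl count_map.
apply: eq_count => j /=; apply: eq_existsb => i.
by rewrite !nth_cat sz_U sz_W ltnNge leq_addr /= addKn.
Qed.

Lemma sdist_xorseq t n (A U W : 'I_t -> seq bool) :
  (forall i, size (A i) = n) -> (forall i, size (U i) = n) -> (forall i, size (W i) = n) ->
  sdist n (fun i => xorseq (A i) (U i)) (fun i => xorseq (A i) (W i)) = sdist n U W.
Proof.
move=> sz_A sz_U sz_W; apply: eq_in_count => j; rewrite mem_iota => /andP[_ lt_j] /=.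
apply: eq_existsb => i.
by rewrite !nth_xorseq ?sz_A ?sz_U ?sz_W // (inj_eq (can_inj (addKb _))).
Qed.

Definition seq_of_word n (w : word n) : seq bool := [seq w i | i <- enum 'I_n].
Definition word_of_seq n (s : seq bool) : word n := [ffun j : 'I_n => nth false s j].

Lemma size_seq_of_word n (w : word n) : size (seq_of_word w) = n.
Proof. by rewrite size_map size_enum_ord. Qed.

Lemma nth_seq_of_word n (w : word n) (j : 'I_n) : nth false (seq_of_word w) j = w j.
Proof. by rewrite (nth_map j) ?size_enum_ord // nth_ord_enum. Qed.

Lemma word_of_seqK n s : size s = n -> seq_of_word (word_of_seq n s) = s.
Proof.
move=> sz_s; apply: (@eq_from_nth _ false); first by rewrite size_seq_of_word.
move=> j; rewrite size_seq_of_word => lt_j.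
by rewrite (nth_seq_of_word _ (Ordinal lt_j)) ffunE.
Qed.

Lemma tdist_sdist t n (v c : tmatrix t n) :
  tdist v c = sdist n (fun i => seq_of_word (v i)) (fun i => seq_of_word (c i)).
Proof.
rewrite /tdist /sdist cardsE cardE /enum_mem size_filter -enumT -val_enum_ord count_map.
by apply: eq_count => j /=; apply: eq_existsb => i; rewrite !nth_seq_of_word.
Qed.

Lemma tcoversP t r m rho :
  reflect (scovers t (2 ^ m) (inRM r m) rho) (tcovers t (@RM r m) rho).
Proof.
apply: (iffP forallP) => [cover U sz_U | cover v].
  have /existsP[c /andP[/forallP RMc dist_c]] := cover [ffun i => word_of_seq (2 ^ m) (U i)].
  exists (fun i => seq_of_word (c i)); split=> // [i|]; first exact: size_seq_of_word.
  rewrite tdist_sdist in dist_c; apply: leq_trans dist_c.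
  by apply/eq_leq/eq_sdist => i //; rewrite ffunE word_of_seqK.
have [W [RMW sz_W dist_W]] := cover (fun i => seq_of_word (v i)) (fun i => size_seq_of_word _).
apply/existsP; exists [ffun i => word_of_seq (2 ^ m) (W i)]; apply/andP; split.
  by apply/forallP => i; rewrite /RM ffunE -/(seq_of_word _) word_of_seqK.
rewrite tdist_sdist; apply: leq_trans dist_W.
by apply/eq_leq/eq_sdist => i //; rewrite ffunE word_of_seqK.
Qed.

Lemma bigmin_le (I : eqType) (s : seq I) (P : pred I) F x j :
  j \in s -> P j -> \big[minn/x]_(i <- s | P i) F i <= F j.
Proof.
elim: s => [|a s IH] //; rewrite in_cons big_cons => /orP[/eqP -> -> | s_j Pj].
  exact: geq_minl.
by case: (P a); rewrite ?geq_min IH ?orbT.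
Qed.

Lemma Rt_le t r m rho : tcovers t (@RM r m) rho -> Rt t r m <= rho.
Proof.
move=> cover; rewrite /Rt /gen_cov_radius.
have [le_rho | lt_rho] := ltnP rho (2 ^ m).+1.
  exact: (bigmin_le (fun i => nat_of_ord i) _ (mem_index_enum (Ordinal le_rho))).
apply: leq_trans (ltnW lt_rho); elim/big_ind: _ => // [x y le_x _|i _].
  by rewrite geq_min le_x.
by rewrite -ltnS.
Qed.

Lemma tcovers_length t r m : tcovers t (@RM r m) (2 ^ m).
Proof.
apply/tcoversP => U sz_U; exists (fun _ => nseq (2 ^ m) false); split.
- by move=> i; exact: inRM_nseq.
- by move=> i; rewrite size_nseq.
- by rewrite /sdist -[X in _ <= X](size_iota 0 (2 ^ m)) count_size.
Qed.

Lemma Rt_covers t r m : tcovers t (@RM r m) (Rt t r m).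
Proof.
rewrite /Rt /gen_cov_radius; elim/big_ind: _ => //; first exact: tcovers_length.
by move=> x y cover_x cover_y; rewrite /minn; case: ifP.
Qed.

Lemma Rt_full t m : Rt t m m = 0.
Proof.
apply/eqP; rewrite -leqn0; apply/Rt_le/tcoversP => U sz_U.
exists U; split=> // [i|]; first exact: inRM_full.
by rewrite /sdist (@eq_count _ _ pred0) ?count_pred0 // => j; apply/existsP => -[i]; rewrite eqxx.
Qed.

Lemma scovers_cat_xorseq t m r rho1 rho2 : 0 < r ->
  scovers t (2 ^ m) (inRM r m) rho1 -> scovers t (2 ^ m) (inRM r.-1 m) rho2 ->
  scovers t (2 ^ m.+1) (inRM r m.+1) (rho1 + rho2).
Proof.
move=> r_gt0 cover1 cover2 U sz_U.
set N := 2 ^ m; have NN : 2 ^ m.+1 = N + N by rewrite expn2S.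
have sz_take i : size (take N (U i)) = N by rewrite size_takel // sz_U NN leq_addr.
have sz_drop i : size (drop N (U i)) = N by rewrite size_drop sz_U NN addnK.
have [W1 [RM_W1 sz_W1 dist_W1]] := cover1 _ sz_take.
have sz_V i : size (xorseq (W1 i) (drop N (U i))) = N by rewrite size_xorseq sz_W1.
have [W2 [RM_W2 sz_W2 dist_W2]] := cover2 _ sz_V.
have sz_W i : size (xorseq (W1 i) (W2 i)) = N by rewrite size_xorseq sz_W1.
exists (fun i => W1 i ++ xorseq (W1 i) (W2 i)); split.
- by move=> i; apply: inRM_cat_xorseq.
- by move=> i; rewrite size_cat sz_W sz_W1.
rewrite (@eq_sdist _ _ U (fun i => take N (U i) ++ drop N (U i)) _ _ _ (fun=> erefl));
  last by move=> i; rewrite cat_take_drop.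
rewrite NN sdist_cat // -[X in _ + X](sdist_xorseq (A := W1)) //.
apply: leq_add => //; apply: leq_trans dist_W2.
by apply/eq_leq/eq_sdist => i //; rewrite xorseqK ?sz_W1 ?sz_W2.
Qed.

Lemma Rt_rec t r m : 0 < r -> Rt t r m.+1 <= Rt t r m + Rt t r.-1 m.
Proof.
move=> r_gt0; apply/Rt_le/tcoversP/scovers_cat_xorseq => //; exact/tcoversP/Rt_covers.
Qed.

Lemma exists_frequent_pattern (X : Type) (I : eqType) (s : seq X) (f : X -> I -> bool)
    (l : seq I) :
  uniq l -> exists b : I -> bool,
    size s <= count (fun x => all (fun j => f x j == b j) l) s * 2 ^ size l.
Proof.
elim: l => [_ | i l IH /= /andP[l'i /IH[b le_b]]].
  by exists (fun=> false); rewrite muln1 count_predT.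
pose agree x := all (fun j => f x j == b j) l.
pose count_at beta := count (fun x => (f x i == beta) && agree x) s.
have [beta le_beta] : exists beta, count agree s <= 2 * count_at beta.
  have -> : count agree s = count_at true + count_at false.
    rewrite -size_filter -(count_predC (f^~ i)) !count_filter.
    by congr (_ + _); apply: eq_count => x /=; rewrite ?eqbF_neg ?eqb_id andbC.
  by case: (leqP (count_at false) (count_at true)) => ?; [exists true | exists false]; lia.
exists (fun j => if j == i then beta else b j); rewrite eqxx expnS mulnA.
apply: leq_trans le_b _; rewrite (mulnC _ 2) leq_mul2r; apply/orP; right.
apply: leq_trans le_beta _; rewrite eq_leq //; congr (_ * _); apply: eq_count => x.
congr (_ && _); apply: eq_in_all => j l_j /=.
by have /negbTE-> : j != i by apply: contraNneq l'i => <-.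
Qed.

Lemma sdist_fixed_rows t n (U : 'I_t.+1 -> seq bool) (w : seq bool) (b : 'I_t.+1 -> bool) :
  let T x := all (fun i => nth false (U i) x == b i) [seq lift ord0 k | k <- enum 'I_t] in
  sdist n U (fun i => if i == ord0 then w else nseq n (b i)) +
  count (fun x => T x && (nth false (U ord0) x == nth false w x)) (iota 0 n) = n.
Proof.
move=> T; set W := fun i => _; set agree := fun x => _.
rewrite /sdist -[RHS](size_iota 0 n) -(count_predC agree) addnC; congr (_ + _).
apply: eq_in_count => x; rewrite mem_iota => /andP[_ lt_x] /=.
have W_lift k : W (lift ord0 k) = nseq n (b (lift ord0 k)).
  by rewrite /W eq_sym (negbTE (neq_lift _ _)).
rewrite -[LHS]negbK negb_exists; congr (~~ _).
apply/forallP/andP => [agree_x | [/allP T_x u_x] i]; last first.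
  rewrite negbK; case: (unliftP ord0 i) => [k -> | ->]; last by rewrite /W eqxx.
  by rewrite W_lift nth_nseq lt_x; apply/T_x/map_f; rewrite mem_enum.
split; last by have := agree_x ord0; rewrite /W eqxx negbK.
apply/allP => _ /mapP[k _ ->]; have := agree_x (lift ord0 k).
by rewrite W_lift nth_nseq lt_x negbK.
Qed.

Local Open Scope R_scope.

HB.instance Definition _ := Monoid.isComLaw.Build R 0 Rplus
  (fun x y z => esym (Rplus_assoc x y z)) Rplus_comm Rplus_0_l.

Lemma big_Rplus_le_max (T : eqType) (l : seq T) (F : T -> R) : l != [::] ->
  exists2 x, x \in l & \big[Rplus/0]_(y <- l) F y <= INR (size l) * F x.
Proof.
elim: l => [|a [|b l] IH] // _.
  by exists a; rewrite ?mem_head // big_seq1 /=; lra.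
have [x l_x le_x] := IH isT.
rewrite big_cons -[size _]/(size (b :: l)).+1 S_INR.
have [le_ax | lt_xa] := Rle_lt_dec (F a) (F x).
  by exists x; [rewrite in_cons l_x orbT | lra].
exists a; first exact: mem_head.
have := pos_INR (size (b :: l)); nra.
Qed.

Fixpoint corr (phi : seq R) (s : seq bool) : R :=
  match phi, s with
  | x :: phi', b :: s' => (if b then - x else x) + corr phi' s'
  | _, _ => 0
  end.

Definition normsq (phi : seq R) : R := \big[Rplus/0]_(x <- phi) x ^ 2.

(* Truth tables of the 2 ^ m linear Boolean functions of m variables. *)
Fixpoint walsh (m : nat) : seq (seq bool) :=
  if m is m'.+1 then [seq s ++ s | s <- walsh m'] ++ [seq s ++ map negb s | s <- walsh m']
  else [:: [:: false]].

Lemma corr_cat phi1 phi2 s1 s2 : size phi1 = size s1 ->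
  corr (phi1 ++ phi2) (s1 ++ s2) = corr phi1 s1 + corr phi2 s2.
Proof.
elim: phi1 s1 => [|x phi1 IH] [|b s1] //=; first by move=> _; lra.
by case=> /IH ->; ring.
Qed.

Lemma corr_negb phi s : corr phi (map negb s) = - corr phi s.
Proof.
elim: phi s => [|x phi IH] [|b s] /=; try lra.
by rewrite IH; case: b => /=; lra.
Qed.

Lemma size_walsh m : size (walsh m) = (2 ^ m)%N.
Proof. by elim: m => //= m IH; rewrite size_cat !size_map IH expn2S. Qed.

Lemma size_in_walsh m s : s \in walsh m -> size s = (2 ^ m)%N.
Proof.
elim: m s => [|m IH] s /=; first by rewrite inE => /eqP ->.
rewrite mem_cat => /orP[] /mapP[u /IH sz_u ->]; by rewrite size_cat ?size_map sz_u expn2S.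
Qed.

Lemma walsh_inRM1 m s : s \in walsh m -> inRM 1 m s.
Proof.
elim: m s => [|m IH] s; first by rewrite inE => /eqP ->.
have uu_RM b u : u \in walsh m -> inRM 1 m.+1 (u ++ map (addb^~ b) u).
  move=> m_u; have sz_u := size_in_walsh m_u.
  by rewrite -xorseq_nseq; apply: inRM_cat_xorseq; rewrite ?size_nseq ?sz_u ?IH ?inRM_nseq.
rewrite /= mem_cat => /orP[] /mapP[u m_u ->].
  by have := uu_RM false u m_u; rewrite (eq_map addbF) map_id.
by have := uu_RM true u m_u; rewrite (eq_map addbT).
Qed.

Lemma sum_corr_sq m phi : size phi = (2 ^ m)%N ->
  \big[Rplus/0]_(s <- walsh m) corr phi s ^ 2 = 2 ^ m * normsq phi.
Proof.
elim: m phi => [|m IH] phi /=.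
  by case: phi => [|x [|y phi]] // _; rewrite /normsq !big_seq1 /=; lra.
rewrite expn2S => sz_phi; rewrite -(cat_take_drop (2 ^ m) phi).
set phi0 := take _ phi; set phi1 := drop _ phi.
have sz0 : size phi0 = (2 ^ m)%N by rewrite size_takel // sz_phi leq_addr.
have sz1 : size phi1 = (2 ^ m)%N by rewrite size_drop sz_phi addnK.
rewrite big_cat /= !big_map -big_split /=.
rewrite (eq_big_seq (fun s => corr phi0 s ^ 2 + corr phi0 s ^ 2 +
                              (corr phi1 s ^ 2 + corr phi1 s ^ 2))); last first.
  by move=> s /size_in_walsh sz_s; rewrite !corr_cat ?corr_negb ?sz0 ?sz_s //; ring.
rewrite !big_split /= !IH // /normsq big_cat /=; ring.
Qed.

Lemma INR_expn2 m : INR (2 ^ m) = 2 ^ m.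
Proof. by elim: m => //= m IH; rewrite expn2S plus_INR IH; ring. Qed.

Lemma exists_correlated_RM1 m phi : size phi = (2 ^ m)%N ->
  exists w, [/\ inRM 1 m w, size w = (2 ^ m)%N & sqrt (normsq phi) <= corr phi w].
Proof.
move=> sz_phi.
have [s walsh_s le_s] : exists2 s, s \in walsh m &
    \big[Rplus/0]_(u <- walsh m) corr phi u ^ 2 <= INR (size (walsh m)) * corr phi s ^ 2.
  by apply: big_Rplus_le_max; rewrite -size_eq0 size_walsh expn_eq0.
rewrite sum_corr_sq // size_walsh INR_expn2 in le_s.
have le_abs : sqrt (normsq phi) <= Rabs (corr phi s).
  rewrite -sqrt_Rsqr_abs Rsqr_pow2; apply: sqrt_le_1_alt.
  by have := pow_lt 2 m; nra.
have [sz_s RM_s] := (size_in_walsh walsh_s, walsh_inRM1 walsh_s).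
have [ge0 | lt0] := Rle_lt_dec 0 (corr phi s).
  by exists s; rewrite -(Rabs_pos_eq _ ge0).
exists (map negb s); split; [exact: inRM_negb | by rewrite size_map |].
by rewrite corr_negb -Rabs_left.
Qed.

Lemma corr_signed_indicator (T u w : nat -> bool) a n :
  corr [seq if T x then (if u x then -1 else 1) else 0 | x <- iota a n] [seq w x | x <- iota a n]
  = 2 * INR (count (fun x => T x && (u x == w x)) (iota a n)) - INR (count T (iota a n)).
Proof.
elim: n a => [|n IH] a /=; first lra.
by rewrite IH !plus_INR; case: (T a); case: (u a); case: (w a) => /=; lra.
Qed.

Lemma normsq_signed_indicator (T u : nat -> bool) a n :
  normsq [seq if T x then (if u x then -1 else 1) else 0 | x <- iota a n] =
  INR (count T (iota a n)).
Proof.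
rewrite /normsq; elim: n a => [|n IH] a /=; first by rewrite big_nil.
by rewrite big_cons IH plus_INR; case: (T a); case: (u a) => /=; lra.
Qed.

Lemma INR_Rt_le t r m (B : R) :
  (forall U : 'I_t -> seq bool, (forall i, size (U i) = (2 ^ m)%N) ->
     exists W : 'I_t -> seq bool, [/\ forall i, inRM r m (W i),
       forall i, size (W i) = (2 ^ m)%N & INR (sdist (2 ^ m) U W) <= B]) ->
  INR (Rt t r m) <= B.
Proof.
move=> cover; have [// | lt_B] := Rle_lt_dec (INR (Rt t r m)) B.
have B_ge0 : 0 <= B.
  have [|W [_ _ le_W]] := cover (fun=> nseq (2 ^ m) false); first by move=> i; rewrite size_nseq.
  exact: Rle_trans (pos_INR _) le_W.
have : (Rt t r m <= (Rt t r m).-1)%N.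
  apply/Rt_le/tcoversP => U sz_U; have [W [RM_W sz_W le_W]] := cover U sz_U.
  exists W; split=> //.
  suff : (sdist (2 ^ m) U W < Rt t r m)%N by lia.
  by apply/ltP/INR_lt; lra.
by case: (Rt t r m) lt_B => [|n] /=; [lra | lia].
Qed.

Definition kappa (t : nat) : R := / (2 * sqrt (2 ^ t)).

Lemma kappa_gt0 t : 0 < kappa t.
Proof.
by apply/Rinv_0_lt_compat/Rmult_lt_0_compat/sqrt_lt_R0/pow_lt; lra.
Qed.

Lemma sqrt_pow x n : 0 <= x -> sqrt (x ^ n) = sqrt x ^ n.
Proof.
move=> x_ge0; elim: n => [|n IH] /=; first exact: sqrt_1.
by rewrite sqrt_mult_alt ?IH.
Qed.

Lemma kappa_sqrt2_pow t m : kappa t * sqrt 2 ^ m = sqrt (2 ^ m / 2 ^ t) / 2.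
Proof.
have pos_t := pow_lt 2 t ltac:(lra).
have sqrt_pos := sqrt_lt_R0 _ pos_t.
rewrite sqrt_div_alt // /kappa (@sqrt_pow 2 m); last lra.
field; lra.
Qed.

Lemma Rt_order1 t m : INR (Rt t.+1 1 m) <= (1 - / 2 ^ t.+1) * 2 ^ m - kappa t * sqrt 2 ^ m.
Proof.
apply: INR_Rt_le => U sz_U; set N := (2 ^ m)%N.
pose l := [seq lift ord0 k | k <- enum 'I_t].
have uniq_l : uniq l by rewrite map_inj_uniq ?enum_uniq //; exact: lift_inj.
have [b le_b] := exists_frequent_pattern (iota 0 N) (fun x i => nth false (U i) x) uniq_l.
rewrite size_iota size_map size_enum_ord -/l in le_b.
pose T x := all (fun i => nth false (U i) x == b i) l.
pose u x := nth false (U ord0) x.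
pose phi := [seq if T x then (if u x then -1 else 1) else 0 | x <- iota 0 N].
have [w [RM_w sz_w le_w]] := @exists_correlated_RM1 m phi (etrans (size_map _ _) (size_iota _ _)).
pose A := count (fun x => T x && (u x == nth false w x)) (iota 0 N).
have corr_w : corr phi w = 2 * INR A - INR (count T (iota 0 N)).
  by rewrite -corr_signed_indicator -[w in corr _ w](mkseq_nth false) sz_w.
rewrite normsq_signed_indicator in le_w.
pose W i := if i == ord0 then w else nseq N (b i).
exists W; split=> [i | i |].
- by rewrite /W; case: eqP => _; rewrite ?inRM_nseq.
- by rewrite /W; case: eqP => _; rewrite ?size_nseq.
have dist_W : (sdist N U W + A)%N = N by exact: sdist_fixed_rows.
have dist_eq : INR (sdist N U W) = 2 ^ m - INR A.
  by have := f_equal INR dist_W; rewrite plus_INR [INR N]INR_expn2; lra.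
have pos_t := pow_lt 2 t ltac:(lra).
have le_tau : 2 ^ m / 2 ^ t <= INR (count T (iota 0 N)).
  apply: (Rmult_le_reg_r (2 ^ t)) => //; rewrite /Rdiv Rmult_assoc Rinv_l; last lra.
  by rewrite Rmult_1_r -!INR_expn2 -mult_INR; apply/le_INR/leP.
have := sqrt_le_1_alt _ _ le_tau.
have -> : (1 - / 2 ^ t.+1) * 2 ^ m = 2 ^ m - 2 ^ m / 2 ^ t / 2 by rewrite /=; field; lra.
rewrite kappa_sqrt2_pow; lra.
Qed.

Lemma sqrt2_gt0 : 0 < sqrt 2.
Proof. by apply: sqrt_lt_R0; lra. Qed.

Lemma sqrt2_sq : sqrt 2 * sqrt 2 = 2.
Proof. by apply: sqrt_sqrt; lra. Qed.

Lemma error_term_rec k beta gamma m r : beta + 1 = sqrt 2 * beta * gamma ->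
  k * sqrt 2 ^ m.+1 * ((1 + sqrt 2) ^ r.+1 - beta ^ r.+2 * gamma ^ m.+1) =
  k * sqrt 2 ^ m * ((1 + sqrt 2) ^ r.+1 - beta ^ r.+2 * gamma ^ m) +
  k * sqrt 2 ^ m * ((1 + sqrt 2) ^ r - beta ^ r.+1 * gamma ^ m).
Proof.
move=> beta_gamma.
have silver : sqrt 2 * (1 + sqrt 2) = (1 + sqrt 2) + 1 by have := sqrt2_sq; lra.
have diff :
  k * sqrt 2 ^ m.+1 * ((1 + sqrt 2) ^ r.+1 - beta ^ r.+2 * gamma ^ m.+1) -
  (k * sqrt 2 ^ m * ((1 + sqrt 2) ^ r.+1 - beta ^ r.+2 * gamma ^ m) +
   k * sqrt 2 ^ m * ((1 + sqrt 2) ^ r - beta ^ r.+1 * gamma ^ m)) =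
  k * sqrt 2 ^ m * ((sqrt 2 * (1 + sqrt 2) - (1 + sqrt 2) - 1) * (1 + sqrt 2) ^ r -
                    (sqrt 2 * beta * gamma - beta - 1) * beta ^ r.+1 * gamma ^ m).
  by rewrite /=; ring.
by rewrite silver -beta_gamma in diff; lra.
Qed.

(* Induction on [m] along [Rt_rec]: the error term obeys the same recursion
   ([error_term_rec]), and its part [beta ^ r * gamma ^ m] makes the bound hold on the
   diagonal [r = m], where [Rt] vanishes. *)
Lemma Rt_le_beta_gamma t beta gamma : 0 < beta -> 0 < gamma ->
    beta + 1 = sqrt 2 * beta * gamma -> 1 + sqrt 2 <= beta * gamma ->
  forall m r, (0 < r <= m)%N ->
  INR (Rt t.+1 r m) <= (1 - / 2 ^ t.+1) * 2 ^ m
    - kappa t * sqrt 2 ^ m * ((1 + sqrt 2) ^ r.-1 - beta ^ r * gamma ^ m).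
Proof.
have s_gt0 := sqrt2_gt0.
move=> beta_gt0 gamma_gt0 beta_gamma le_beta_gamma.
have kappa_pos := kappa_gt0 t.
elim=> [|m IH] r /andP[r_gt0 le_rm]; first lia.
have sqrt2_pow_gt0 := pow_lt (sqrt 2) m.+1 sqrt2_gt0.
have [-> | r_neq1] := eqVneq r 1%N.
  have := Rt_order1 t m.+1.
  have : 0 <= kappa t * sqrt 2 ^ m.+1 * (beta ^ 1 * gamma ^ m.+1).
    by apply: Rmult_le_pos; [nra | apply: Rmult_le_pos; apply: pow_le; lra].
  rewrite [_ ^ 1.-1]/=; lra.
have [-> | r_neq] := eqVneq r m.+1.
  have le_pow : (1 + sqrt 2) ^ m <= beta ^ m.+1 * gamma ^ m.+1.
    rewrite -Rpow_mult_distr; apply: (@Rle_trans _ ((1 + sqrt 2) ^ m.+1)).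
      by apply: Rle_pow; [lra | lia].
    by apply: pow_incr; lra.
  have : 0 <= / 2 ^ t.+1 <= 1.
    split; first by apply/Rlt_le/Rinv_0_lt_compat/pow_lt; lra.
    by rewrite -Rinv_1; apply: Rinv_le_contravar; [lra | apply: pow_R1_Rle; lra].
  have := pow_lt 2 m.+1 ltac:(lra).
  have : 0 <= kappa t * sqrt 2 ^ m.+1 * (beta ^ m.+1 * gamma ^ m.+1 - (1 + sqrt 2) ^ m).
    by apply: Rmult_le_pos; nra.
  rewrite Rt_full [INR 0]/= [m.+1.-1]/=; nra.
case: r r_gt0 le_rm r_neq1 r_neq => [|[|r]] // _ le_rm _ r_neq.
have /leP/le_INR := @Rt_rec t.+1 r.+2 m isT; rewrite plus_INR.
have := IH r.+2 ltac:(lia); have := IH r.+1 ltac:(lia).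
rewrite (error_term_rec (kappa t) m r beta_gamma) /=; lra.
Qed.

Lemma ln_le_sub1 x : 0 < x -> ln x <= x - 1.
Proof.
move=> x_gt0; have [// | lt_x] := Rle_lt_dec (ln x) (x - 1).
have := exp_increasing _ _ lt_x; rewrite exp_ln //.
by have := exp_ineq1_le (x - 1); lra.
Qed.

(* [beta = (1 + sqrt 2) * (1 + h)] for a small [h > 0]: then
   [ln (beta / (1 + sqrt 2)) <= h] while [ln gamma <= - h / ((2 + sqrt 2) * (1 + h))]. *)
Lemma exists_beta_gamma alpha : 0 < alpha -> alpha * (2 + sqrt 2) < 1 ->
  exists beta gamma, [/\ 0 < beta, 0 < gamma, beta + 1 = sqrt 2 * beta * gamma,
    1 + sqrt 2 <= beta * gamma & alpha * ln (beta / (1 + sqrt 2)) + ln gamma < 0].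
Proof.
move=> alpha_gt0 alpha_lt; have s_gt0 := sqrt2_gt0; have s_sq := sqrt2_sq.
set q := alpha * (2 + sqrt 2) in alpha_lt.
have q_gt0 : 0 < q by rewrite /q; nra.
set h := (1 - q) / (2 * q).
have h_gt0 : 0 < h by apply: Rdiv_lt_0_compat; lra.
set L := 1 + sqrt 2; set beta := L * (1 + h); set gamma := (beta + 1) / (sqrt 2 * beta).
have beta_gt0 : 0 < beta by rewrite /beta /L; nra.
have sqrt2_beta : sqrt 2 * beta = (2 + sqrt 2) * (1 + h) by rewrite /beta /L; nra.
have gamma_sub1 : gamma - 1 = - h / ((2 + sqrt 2) * (1 + h)).
  by rewrite /gamma sqrt2_beta /beta /L; field; lra.
have gamma_gt0 : 0 < gamma.
  by apply: Rdiv_lt_0_compat; [lra | rewrite sqrt2_beta; nra].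
exists beta, gamma; split=> //.
- by rewrite /gamma; field; lra.
- have -> : beta * gamma = (beta + 1) / sqrt 2 by rewrite /gamma; field; lra.
  have : L * sqrt 2 <= beta + 1 by rewrite /beta /L; nra.
  move=> ?; apply: (Rmult_le_reg_r (sqrt 2)) => //.
  by rewrite /Rdiv Rmult_assoc Rinv_l; lra.
have ln_h : ln (beta / L) <= h.
  rewrite /beta /L; have -> : (1 + sqrt 2) * (1 + h) / (1 + sqrt 2) = 1 + h by field; lra.
  by have := @ln_le_sub1 (1 + h) ltac:(lra); lra.
have := ln_le_sub1 gamma_gt0; rewrite gamma_sub1 => ln_gamma.
have D_gt0 : 0 < (2 + sqrt 2) * (1 + h) by nra.
have q_h : q * (1 + h) = (1 + q) / 2 by rewrite /h; field; lra.
have : alpha * h < h / ((2 + sqrt 2) * (1 + h)).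
  apply: (Rmult_lt_reg_r ((2 + sqrt 2) * (1 + h))) => //.
  have -> : h / ((2 + sqrt 2) * (1 + h)) * ((2 + sqrt 2) * (1 + h)) = h by field; lra.
  by rewrite /q in q_h; nra.
by have := Rmult_le_compat_l _ _ _ (Rlt_le _ _ alpha_gt0) ln_h; lra.
Qed.

Lemma pow_mul_pow_eventually_le a g alpha delta :
  0 < a -> 0 < g -> alpha * ln a + ln g < 0 -> 0 < delta ->
  exists M, forall m r, (M <= m)%N -> INR r = alpha * INR m -> a ^ r * g ^ m <= delta.
Proof.
move=> a_gt0 g_gt0 rate_lt0 delta_gt0; set c := - (alpha * ln a + ln g).
have [M [inv_M /ltP M_gt0]] := archimed_cor1 (c * delta) ltac:(rewrite /c; nra).
exists M => m r le_Mm r_eq.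
have INR_M_gt0 : 0 < INR M by apply/lt_0_INR/ltP.
have le_M : INR M <= INR m by apply/le_INR/leP.
have exp_gt0 := exp_pos (c * INR m).
have -> : a ^ r * g ^ m = / exp (c * INR m).
  have ar_gm_gt0 : 0 < a ^ r * g ^ m by apply: Rmult_lt_0_compat; apply: pow_lt.
  rewrite -exp_Ropp -(exp_ln _ ar_gm_gt0) ln_mult ?ln_pow ?r_eq //; try exact: pow_lt.
  by congr exp; rewrite /c; ring.
have one_lt : 1 < c * delta * INR M.
  have := Rmult_lt_compat_r _ _ _ INR_M_gt0 inv_M; rewrite Rinv_l //; lra.
have c_gt0 : 0 < c by rewrite /c; lra.
have grow_m : delta * (1 + c * INR m) <= delta * exp (c * INR m).
  by apply: Rmult_le_compat_l; [lra | exact: exp_ineq1_le].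
have grow_M : c * delta * INR M <= c * delta * INR m by apply: Rmult_le_compat_l; nra.
apply: (Rmult_le_reg_r (exp (c * INR m))) => //; rewrite Rinv_l; lra.
Qed.

Lemma mul_two_add_sqrt2_lt1 alpha : alpha < 1 - 1 / sqrt 2 -> alpha * (2 + sqrt 2) < 1.
Proof.
have s_gt0 := sqrt2_gt0; have s_sq := sqrt2_sq.
have inv_sqrt2 : 1 / sqrt 2 * sqrt 2 = 1 by field; lra.
move=> alpha_lt; nra.
Qed.

Lemma Rpower2_eq_pow_mul_pow alpha m r : INR r = alpha * INR m ->
  Rpower 2 (INR m * (1 / 2 + alpha * (ln (1 + sqrt 2) / ln 2))) =
  sqrt 2 ^ m * (1 + sqrt 2) ^ r.
Proof.
have s_gt0 := sqrt2_gt0.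
move=> r_eq.
have ln2_gt0 : 0 < ln 2 by rewrite -ln_1; apply: ln_increasing; lra.
have ln_sqrt2 : ln (sqrt 2) = ln 2 / 2.
  by have := ln_mult _ _ sqrt2_gt0 sqrt2_gt0; rewrite sqrt_sqrt; lra.
have pos : 0 < sqrt 2 ^ m * (1 + sqrt 2) ^ r by apply: Rmult_lt_0_compat; apply: pow_lt; lra.
rewrite /Rpower -(exp_ln _ pos) ln_mult ?ln_pow ?ln_sqrt2 ?r_eq; try (apply: pow_lt; lra); try lra.
by congr exp; field; lra.
Qed.

Lemma coefficient_le_kappa t :
  sqrt (2 ^ t.+1 - 1) / (2 ^ t.+1 * (2 + sqrt 2)) * (1 + sqrt 2) <= kappa t.
Proof.
have s_gt0 := sqrt2_gt0; have s_sq := sqrt2_sq.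
have X_ge1 : 1 <= 2 ^ t by apply: pow_R1_Rle; lra.
rewrite [2 ^ t.+1]/= /kappa; set X := 2 ^ t in X_ge1 *.
have sX_gt0 : 0 < sqrt X by apply: sqrt_lt_R0; lra.
have sX_sq : sqrt X * sqrt X = X by apply: sqrt_sqrt; lra.
have le_sqrt : sqrt (2 * X - 1) <= sqrt 2 * sqrt X.
  by rewrite -sqrt_mult; [apply: sqrt_le_1_alt | |]; lra.
have sq_ge0 := sqrt_pos (2 * X - 1).
have D_gt0 : 0 < 2 * X * (2 + sqrt 2) * (2 * sqrt X) by nra.
apply: (Rmult_le_reg_r _ _ _ D_gt0).
have -> : sqrt (2 * X - 1) / (2 * X * (2 + sqrt 2)) * (1 + sqrt 2) *
          (2 * X * (2 + sqrt 2) * (2 * sqrt X)) = sqrt (2 * X - 1) * (1 + sqrt 2) * (2 * sqrt X).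
  by field; lra.
have -> : / (2 * sqrt X) * (2 * X * (2 + sqrt 2) * (2 * sqrt X)) = 2 * X * (2 + sqrt 2).
  by field; lra.
nra.
Qed.

Lemma Rt_le_small_error t beta gamma delta m r : 0 < beta -> 0 < gamma ->
    beta + 1 = sqrt 2 * beta * gamma -> 1 + sqrt 2 <= beta * gamma -> (0 < r <= m)%N ->
    (beta / (1 + sqrt 2)) ^ r * gamma ^ m <= delta / (1 + sqrt 2) ->
  INR (Rt t.+1 r m) <= (1 - / 2 ^ t.+1) * 2 ^ m
    - kappa t * (sqrt 2 ^ m * (1 + sqrt 2) ^ r.-1) * (1 - delta).
Proof.
move=> beta_gt0 gamma_gt0 beta_gamma le_beta_gamma r_range small.
have := @Rt_le_beta_gamma t beta gamma beta_gt0 gamma_gt0 beta_gamma le_beta_gamma m r r_range.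
have s_gt0 := sqrt2_gt0; set L := 1 + sqrt 2 in small *; have L_gt0 : 0 < L by rewrite /L; lra.
have Lr : L ^ r = L * L ^ r.-1 by rewrite -[in LHS](prednK (proj1 (andP r_range))).
have Lr1_gt0 : 0 < L ^ r.-1 by apply: pow_lt.
have err : beta ^ r * gamma ^ m <= delta * L ^ r.-1.
  have -> : beta ^ r = L ^ r * (beta / L) ^ r by rewrite -Rpow_mult_distr; congr pow; field; lra.
  have := Rmult_le_compat_l (L * L ^ r.-1) _ _ ltac:(nra) small.
  have -> : L * L ^ r.-1 * (delta / L) = delta * L ^ r.-1 by field; lra.
  by rewrite Lr; lra.
have coef_ge0 : 0 <= kappa t * sqrt 2 ^ m.
  by have := kappa_gt0 t; have := pow_lt (sqrt 2) m s_gt0; nra.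
by have := Rmult_le_compat_l _ _ _ coef_ge0 err; lra.
Qed.

Lemma Rt_asymptotic_bound t alpha eps : 0 < alpha -> alpha < 1 - 1 / sqrt 2 -> 0 < eps ->
  exists M, forall m r, (M <= m)%coq_nat -> INR r = alpha * INR m ->
    INR (Rt t.+1 r m) <= (1 - 1 / 2 ^ t.+1) * 2 ^ m
      - sqrt (2 ^ t.+1 - 1) / (2 ^ t.+1 * (2 + sqrt 2)) * (sqrt 2 ^ m * (1 + sqrt 2) ^ r)
        * (1 - eps).
Proof.
move=> alpha_gt0 alpha_lt eps_gt0; have s_gt0 := sqrt2_gt0.
have [beta [gamma [beta_gt0 gamma_gt0 beta_gamma le_beta_gamma rate]]] :=
  exists_beta_gamma alpha_gt0 (mul_two_add_sqrt2_lt1 alpha_lt).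
have L_gt0 : 0 < 1 + sqrt 2 by lra.
set delta := Rmin eps 1.
have delta_gt0 : 0 < delta by apply: Rmin_glb_lt; lra.
have [M small] := pow_mul_pow_eventually_le (Rdiv_lt_0_compat _ _ beta_gt0 L_gt0) gamma_gt0 rate
  (Rdiv_lt_0_compat _ _ delta_gt0 L_gt0).
exists M.+1 => m r /leP le_Mm r_eq.
have r_range : (0 < r <= m)%N.
  have : 0 < 1 / sqrt 2 by apply: Rdiv_lt_0_compat; lra.
  have m_gt0 : 0 < INR m by apply/lt_0_INR/ltP; lia.
  by move=> ?; apply/andP; split; [apply/ltP/INR_lt | apply/leP/INR_le]; rewrite r_eq /=; nra.
have := Rt_le_small_error t beta_gt0 gamma_gt0 beta_gamma le_beta_gamma r_range
  (small m r (ltnW le_Mm) r_eq).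
set K := sqrt _ / _.
have K_ge0 : 0 <= K.
  apply: Rmult_le_pos; first exact: sqrt_pos.
  by apply/Rlt_le/Rinv_0_lt_compat/Rmult_lt_0_compat; [apply: pow_lt | ]; lra.
have K_L := coefficient_le_kappa t; fold K in K_L.
have [delta_le1 delta_le_eps] : delta <= 1 /\ delta <= eps by split; [apply: Rmin_r | apply: Rmin_l].
have P_gt0 : 0 < sqrt 2 ^ m * (1 + sqrt 2) ^ r.-1 by apply: Rmult_lt_0_compat; apply: pow_lt.
have -> : 1 / 2 ^ t.+1 = / 2 ^ t.+1 by rewrite /Rdiv Rmult_1_l.
rewrite -[in (1 + sqrt 2) ^ r](prednK (proj1 (andP r_range))) /=.
have := Rmult_le_compat_r (sqrt 2 ^ m * (1 + sqrt 2) ^ r.-1 * (1 - delta)) _ _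
  ltac:(apply: Rmult_le_pos; lra) K_L.
have : K * (1 + sqrt 2) * (sqrt 2 ^ m * (1 + sqrt 2) ^ r.-1) * (1 - eps) <=
       K * (1 + sqrt 2) * (sqrt 2 ^ m * (1 + sqrt 2) ^ r.-1) * (1 - delta).
  by apply: Rmult_le_compat_l; [apply: Rmult_le_pos; nra | lra].
lra.
Qed.

End RMCovering.

Open Scope R_scope.

Theorem theorem21 (t : nat) (alpha : R) :
  (1 <= t)%nat ->
  0 < alpha -> alpha < 1 - 1 / sqrt 2 ->
  forall eps : R, 0 < eps ->
  exists M : nat, forall m r : nat, (M <= m)%nat -> INR r = alpha * INR m ->
    INR (Rt t r m) <=
      (1 - 1 / 2 ^ t) * 2 ^ m
      - sqrt (2 ^ t - 1) / (2 ^ t * (2 + sqrt 2))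
        * Rpower 2 (INR m * (1 / 2 + alpha * (ln (1 + sqrt 2) / ln 2)))
        * (1 - eps).
Proof.
case: t => [|t] t_ge1 alpha_gt0 alpha_lt eps eps_gt0; first by inversion t_ge1.
have [M bound] := @RMCovering.Rt_asymptotic_bound t alpha eps alpha_gt0 alpha_lt eps_gt0.
exists M => m r le_Mm r_eq.
by rewrite (RMCovering.Rpower2_eq_pow_mul_pow r_eq); exact: bound le_Mm r_eq.
Qed.
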